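(* Let $A$ be a commutative ring, $M$ an $A$-module, $L$ a proper $A$-submodule of $M$, and $T \subseteq A$. If $L$ is a $T$-factroid of $M$, then $\langle T \rangle \cap \operatorname{ann}_A(M/L) = \emptyset$. The converse holds if $L$ is a primary submodule of $M$.
   Context: For $T\subseteq A$, a $T$-factroid of $M$ is an additive subgroup $F$ of $M$ such that for all $x\in M$ and $t\in T$, $tx\in F$ implies $x\in F$. $\langle T\rangle$ is the multiplicative submonoid of $A$ generated by $T$. A proper submodule $L$ of $M$ is primary if for every $r\in A$, either $\{x\in M\mid rx\in L\}=L$ or $r^nM\subseteq L$ for some $n\in\mathbb{N}$. *)

From mathcomp Require Import all_boot all_algebra.
Set Implicit Arguments. Unset Strict Implicit. Unset Printing Implicit Defensive.
Import GRing.Theory.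
Local Open Scope ring_scope.

Section Defs.
Variables (A : comNzRingType) (M : lmodType A).

Definition is_submodule (L : M -> Prop) : Prop :=
  L 0 /\ (forall (a : A) (u v : M), L u -> L v -> L (a *: u + v)).

Definition is_add_subgroup (F : M -> Prop) : Prop :=
  F 0 /\ (forall u v : M, F u -> F v -> F (u - v)).

Definition proper_submod (L : M -> Prop) : Prop := exists x : M, ~ L x.

Definition factroid (T : A -> Prop) (F : M -> Prop) : Prop :=
  is_add_subgroup F /\
  (forall (x : M) (t : A), T t -> F (t *: x) -> F x).

Inductive gen_monoid (T : A -> Prop) : A -> Prop :=
  | gen_monoid_one : gen_monoid T 1
  | gen_monoid_gen : forall t, T t -> gen_monoid T t
  | gen_monoid_mul : forall r s, gen_monoid T r -> gen_monoid T s ->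
                       gen_monoid T (r * s).

Definition ann_quot (L : M -> Prop) (r : A) : Prop := forall x : M, L (r *: x).

Definition primary (L : M -> Prop) : Prop :=
  is_submodule L /\ proper_submod L /\
  forall r : A,
    (forall x : M, L (r *: x) <-> L x) \/
    (exists n : nat, forall x : M, L (r ^+ n *: x)).

End Defs.

From mathcomp Require Import all_boot all_algebra.
Local Open Scope ring_scope.
Import GRing.Theory.

(* A T-factroid is a <T>-factroid, so a proper one cannot contain r M for r in
   <T>: cancelling r from r *: x would put every x in it. Conversely, for a
   primary L each t in T either satisfies (L : t) = L, which is the factroid
   condition, or has a power t^n in ann(M/L), which is excluded because
   t^n lies in <T>. *)

Section Factroids.
Variables (A : comNzRingType) (M : lmodType A).
Implicit Types (T : A -> Prop) (F L : M -> Prop).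

Lemma submodule_add_subgroup L : is_submodule L -> is_add_subgroup L.
Proof.
move=> [L0 Llin]; split=> // u v Lu Lv.
have Lnv : L (- v) by rewrite -[- v]addr0 -scaleN1r; exact: Llin.
by rewrite -[u]scale1r; exact: Llin.
Qed.

Lemma gen_monoid_exp {T t} n : T t -> gen_monoid T (t ^+ n).
Proof.
move=> Tt; elim: n => [|n IHn]; first by rewrite expr0; exact: gen_monoid_one.
by rewrite exprS; apply: gen_monoid_mul => //; exact: gen_monoid_gen.
Qed.

Lemma factroid_gen_monoid T F : factroid T F -> factroid (gen_monoid T) F.
Proof.
move=> [Fsub Fcancel]; split=> // x r Tr; elim: Tr x => [|t Tt|p q _ IHp _ IHq] x.
- by rewrite scale1r.
- exact: Fcancel.
- by rewrite -scalerA => /IHp /IHq.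
Qed.

Lemma factroid_ann_quot_gen_monoid T F r :
  proper_submod F -> factroid T F -> gen_monoid T r -> ~ ann_quot F r.
Proof.
move=> [y Fy] /factroid_gen_monoid [_ Fcancel] Tr annr.
exact/Fy/(Fcancel y r Tr)/annr.
Qed.

Lemma primary_factroid T L :
  primary L -> (forall r, gen_monoid T r -> ~ ann_quot L r) -> factroid T L.
Proof.
move=> [Lsub [_ Lprim]] Tann; split; first exact: submodule_add_subgroup.
move=> x t Tt Ltx; have [colon_t|[n annt]] := Lprim t; first exact/colon_t.
by case: (Tann _ (gen_monoid_exp n Tt) annt).
Qed.

End Factroids.

Theorem proposition3p12 (A : comNzRingType) (M : lmodType A)
  (L : M -> Prop) (T : A -> Prop) :
  is_submodule L -> proper_submod L ->
  (factroid T L -> forall r : A, gen_monoid T r -> ~ ann_quot L r) /\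
  (primary L -> (forall r : A, gen_monoid T r -> ~ ann_quot L r) ->
     factroid T L).
Proof.
move=> _ Lproper; split=> [Lfac r Tr | ]; last exact: primary_factroid.
exact: factroid_ann_quot_gen_monoid Lfac Tr.
Qed.
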